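(* Let $(M,g)$ be a semi-Riemannian manifold with Levi-Civita connection $\overset{\circ}{\nabla}$, let $\pi,W$ be one-forms on $M$, and let $U$ be the $(1,2)$-tensor field $$U(\omega,X,Y)=\pi(\omega^\sharp)W(X)W(Y)-\frac12\left(W(\omega^\sharp)W(X)\pi(Y)+W(\omega^\sharp)W(Y)\pi(X)\right).$$ Then the pair $(\nabla,U)$ with $\nabla_XY=\overset{\circ}{\nabla}_XY+U(-,X,Y)$ is a Schrödinger connection.
   Context: $X^\flat=g(X,-)$, $\omega^\sharp=g^{-1}(\omega,-)$. For a $(1,2)$-tensor field $U$, $U(-,X,Y)$ denotes the vector field with $\omega(U(-,X,Y))=U(\omega,X,Y)$. A Schrödinger connection is an affine connection $\nabla_XY=\overset{\circ}{\nabla}_XY+U(-,X,Y)$ where $U$ satisfies, for all vector fields $X,Y$ and one-forms $\omega$: (a) $U(\omega,X,Y)=U(\omega,Y,X)$, and (b) $U(\omega,X,Y)+U(\omega,Y,X)+U(X^\flat,\omega^\sharp,Y)+U(X^\flat,Y,\omega^\sharp)+U(Y^\flat,\omega^\sharp,X)+U(Y^\flat,X,\omega^\sharp)=0$. *)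

From mathcomp Require Import all_boot all_order all_algebra.
Set Implicit Arguments. Unset Strict Implicit. Unset Printing Implicit Defensive.
Import Order.TTheory GRing.Theory Num.Theory.
Local Open Scope ring_scope.

(* Tangent vectors and covectors at a point of an n-dimensional manifold are
   represented by their components in a fixed basis, as row vectors 'rV[R]_n.
   The metric at the point is the symmetric, nondegenerate (invertible)
   component matrix G (any signature: semi-Riemannian). *)

Section Defs.
Variable R : realFieldType.
Variable n : nat.

Definition pair (w X : 'rV[R]_n) : R := \sum_(i < n) w 0 i * X 0 i.

Definition flat (G : 'M[R]_n) (X : 'rV[R]_n) : 'rV[R]_n := X *m G.
Definition sharp (G : 'M[R]_n) (w : 'rV[R]_n) : 'rV[R]_n := w *m invmx G.

Definition metric (G : 'M[R]_n) : Prop := G^T = G /\ G \in unitmx.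

Definition tensor12 (U : 'rV[R]_n -> 'rV[R]_n -> 'rV[R]_n -> R) : Prop :=
  [/\ (forall a w w' X Y, U (a *: w + w') X Y = a * U w X Y + U w' X Y),
      (forall a w X X' Y, U w (a *: X + X') Y = a * U w X Y + U w X' Y) &
      (forall a w X Y Y', U w X (a *: Y + Y') = a * U w X Y + U w X Y')].

(* U defines a Schroedinger connection nabla = LeviCivita + U(-,.,.):
   U is a (1,2)-tensor satisfying conditions (a) and (b). *)
Definition schrodinger (G : 'M[R]_n)
    (U : 'rV[R]_n -> 'rV[R]_n -> 'rV[R]_n -> R) : Prop :=
  [/\ tensor12 U,
      (forall w X Y, U w X Y = U w Y X) &
      (forall w X Y,
         U w X Y + U w Y X + U (flat G X) (sharp G w) Y + U (flat G X) Y (sharp G w)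
         + U (flat G Y) (sharp G w) X + U (flat G Y) X (sharp G w) = 0)].

Definition Upw (G : 'M[R]_n) (p W : 'rV[R]_n) (w X Y : 'rV[R]_n) : R :=
  pair p (sharp G w) * pair W X * pair W Y
  - 2^-1 * (pair W (sharp G w) * pair W X * pair p Y
            + pair W (sharp G w) * pair W Y * pair p X).

End Defs.

From mathcomp Require Import all_boot all_order all_algebra.
From mathcomp Require Import ring.
Import Order.TTheory GRing.Theory Num.Theory.
Local Open Scope ring_scope.

(* Once [sharp (flat X) = X] is used
   in the four terms of condition (b) that carry a lowered index, the whole
   expression is a polynomial in the six numbers [pi(w#), W(w#), pi X, W X,
   pi Y, W Y] that vanishes identically. *)

Section Pairing.
Variables (R : realFieldType) (n : nat).
Implicit Types (G : 'M[R]_n) (u v : 'rV[R]_n).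

Lemma pairC u v : pair u v = pair v u.
Proof. by rewrite /pair; apply: eq_bigr => i _; rewrite mulrC. Qed.

Lemma pairZDl a u u' v : pair (a *: u + u') v = a * pair u v + pair u' v.
Proof.
rewrite /pair mulr_sumr -big_split /=; apply: eq_bigr => i _.
by rewrite !mxE mulrDl mulrA.
Qed.

Lemma pairZDr a u v v' : pair u (a *: v + v') = a * pair u v + pair u v'.
Proof. by rewrite pairC pairZDl !(pairC u). Qed.

Lemma sharpZD G a u u' : sharp G (a *: u + u') = a *: sharp G u + sharp G u'.
Proof. by rewrite /sharp mulmxDl scalemxAl. Qed.

Lemma sharp_flat G v : G \in unitmx -> sharp G (flat G v) = v.
Proof. by move=> Gunit; rewrite /sharp /flat mulmxK. Qed.

End Pairing.

Section Upw.
Variables (R : realFieldType) (n : nat) (G : 'M[R]_n) (p W : 'rV[R]_n).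

Lemma Upw_tensor12 : tensor12 (Upw G p W).
Proof.
split=> a *; rewrite /Upw ?sharpZD !pairZDr; ring.
Qed.

Lemma UpwC w X Y : Upw G p W w X Y = Upw G p W w Y X.
Proof. by rewrite /Upw; ring. Qed.

Lemma Upw_flat X Y Z : G \in unitmx ->
  Upw G p W (flat G X) Y Z =
  pair p X * pair W Y * pair W Z
  - 2^-1 * (pair W X * pair W Y * pair p Z + pair W X * pair W Z * pair p Y).
Proof. by move=> Gunit; rewrite /Upw sharp_flat. Qed.

End Upw.

Theorem mainTheorem7 (R : realFieldType) (n : nat) (G : 'M[R]_n)
    (p W : 'rV[R]_n) :
  metric G -> schrodinger G (Upw G p W).
Proof.
case=> _ Gunit; split; [exact: Upw_tensor12 | exact: UpwC |].
by move=> w X Y; rewrite !Upw_flat // /Upw; field.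
Qed.
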